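(* The model structure $\mathbb{C}^F$ associated to a functor $F:\mathcal{C}\to\mathscr{E}'$ need not be proper: there exist a bicomplete category $\mathcal{C}$ and a functor $F:\mathcal{C}\to\mathscr{E}'$ for which $\mathbb{C}^F$ is not right proper, and there exist a bicomplete category $\mathcal{C}$ and a functor $F:\mathcal{C}\to\mathscr{E}'$ for which $\mathbb{C}^F$ is not left proper.
   Context: Bicomplete means having all finite limits and finite colimits. $\mathscr{E}'$ is the totally ordered category with three objects $\varnothing\to E\to *$. For a functor $F:\mathcal{C}\to\mathscr{E}'$, $\mathbb{C}^F$ is the model structure on $\mathcal{C}$ with cofibrations $\{A\to B: F(B)\ne\varnothing\}\cup\mathrm{iso}\,\mathcal{C}$, fibrations $\{X\to Y: F(X)\neq *\}\cup\mathrm{iso}\,\mathcal{C}$, and weak equivalences $\{f: F(f)=1_\varnothing\text{ or }F(f)=1_*\}\cup\mathrm{iso}\,\mathcal{C}$. Left (resp. right) proper: pushouts of weak equivalences along cofibrations (resp. pullbacks along fibrations) are weak equivalences. *)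

Set Implicit Arguments.
Unset Strict Implicit.

Record Category := {
  Obj :> Type;
  Hom : Obj -> Obj -> Type;
  idm : forall A, Hom A A;
  comp : forall A B C, Hom B C -> Hom A B -> Hom A C;
  comp_id_l : forall A B (f : Hom A B), comp (idm B) f = f;
  comp_id_r : forall A B (f : Hom A B), comp f (idm A) = f;
  comp_assoc : forall A B C D (h : Hom C D) (g : Hom B C) (f : Hom A B),
      comp h (comp g f) = comp (comp h g) f
}.

Arguments Hom {c} _ _.
Arguments idm {c} _.
Arguments comp {c A B C} _ _.

Section Cat.
Variable C : Category.

Definition is_iso {A B : C} (f : Hom A B) : Prop :=
  exists g : Hom B A, comp g f = idm A /\ comp f g = idm B.

Definition is_terminal (T : C) : Prop :=
  forall X : C, exists! f : Hom X T, True.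
Definition is_product (P X Y : C) (p1 : Hom P X) (p2 : Hom P Y) : Prop :=
  forall (Q : C) (f1 : Hom Q X) (f2 : Hom Q Y),
    exists! h : Hom Q P, comp p1 h = f1 /\ comp p2 h = f2.
Definition is_equalizer (E X Y : C) (e : Hom E X) (f g : Hom X Y) : Prop :=
  comp f e = comp g e /\
  forall (Q : C) (h : Hom Q X), comp f h = comp g h ->
    exists! u : Hom Q E, comp e u = h.

Definition is_initial (I : C) : Prop :=
  forall X : C, exists! f : Hom I X, True.
Definition is_coproduct (S X Y : C) (i1 : Hom X S) (i2 : Hom Y S) : Prop :=
  forall (Q : C) (f1 : Hom X Q) (f2 : Hom Y Q),
    exists! h : Hom S Q, comp h i1 = f1 /\ comp h i2 = f2.
Definition is_coequalizer (E X Y : C) (e : Hom Y E) (f g : Hom X Y) : Prop :=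
  comp e f = comp e g /\
  forall (Q : C) (h : Hom Y Q), comp h f = comp h g ->
    exists! u : Hom E Q, comp u e = h.

Definition finitely_complete : Prop :=
  (exists T : C, is_terminal T) /\
  (forall X Y : C, exists (P : C) (p1 : Hom P X) (p2 : Hom P Y), is_product p1 p2) /\
  (forall (X Y : C) (f g : Hom X Y), exists (E : C) (e : Hom E X), is_equalizer e f g).

Definition finitely_cocomplete : Prop :=
  (exists I : C, is_initial I) /\
  (forall X Y : C, exists (S : C) (i1 : Hom X S) (i2 : Hom Y S), is_coproduct i1 i2) /\
  (forall (X Y : C) (f g : Hom X Y), exists (E : C) (e : Hom Y E), is_coequalizer e f g).

Definition bicomplete : Prop := finitely_complete /\ finitely_cocomplete.

(** Pullback square   P --a--> X
                      |b       |p
                      v        v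
                      Z --w--> Y      *)
Definition is_pullback (P X Y Z : C) (a : Hom P X) (b : Hom P Z)
    (p : Hom X Y) (w : Hom Z Y) : Prop :=
  comp p a = comp w b /\
  forall (Q : C) (x : Hom Q X) (z : Hom Q Z), comp p x = comp w z ->
    exists! u : Hom Q P, comp a u = x /\ comp b u = z.

(** Pushout square    A --i--> B
                      |w       |v
                      v        v
                      Z --j--> D      *)
Definition is_pushout (A B Z D : C) (i : Hom A B) (w : Hom A Z)
    (v : Hom B D) (j : Hom Z D) : Prop :=
  comp v i = comp j w /\
  forall (Q : C) (x : Hom B Q) (z : Hom Z Q), comp x i = comp z w ->
    exists! u : Hom D Q, comp u v = x /\ comp u j = z.
End Cat.

(** The totally ordered category E' : Empt -> Emid -> Star  (∅ -> E -> * ). *)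
Inductive E3 : Type := Empt | Emid | Star.

Definition E3le (x y : E3) : Prop :=
  match x, y with
  | Empt, _ => True
  | Emid, Empt => False
  | Emid, _ => True
  | Star, Star => True
  | Star, _ => False
  end.

(** A functor into the thin category E' is exactly a monotone object map
    (the morphism part is forced since E' is a poset). *)
Record FunctorE (C : Category) := {
  Fob :> C -> E3;
  Fmon : forall (A B : C) (f : Hom A B), E3le (Fob A) (Fob B)
}.

Section ModelCF.
Variables (C : Category) (F : FunctorE C).

(** For f : A -> B, F(f) = 1_∅ iff F A = F B = ∅, and F(f) = 1_* iff F A = F B = *. *)
Definition CF_cof {A B : C} (f : Hom A B) : Prop := F B <> Empt \/ is_iso f.
Definition CF_fib {X Y : C} (f : Hom X Y) : Prop := F X <> Star \/ is_iso f.
Definition CF_weq {A B : C} (f : Hom A B) : Prop :=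
  (F A = Empt /\ F B = Empt) \/ (F A = Star /\ F B = Star) \/ is_iso f.

Definition CF_right_proper : Prop :=
  forall (P X Y Z : C) (a : Hom P X) (b : Hom P Z) (p : Hom X Y) (w : Hom Z Y),
    CF_fib p -> CF_weq w -> is_pullback a b p w -> CF_weq a.

Definition CF_left_proper : Prop :=
  forall (A B Z D : C) (i : Hom A B) (w : Hom A Z) (v : Hom B D) (j : Hom Z D),
    CF_cof i -> CF_weq w -> is_pushout i w v j -> CF_weq v.
End ModelCF.

(* Both counterexamples live in the diamond lattice bool * bool, viewed as a
   thin category: there pullbacks are meets and pushouts are joins, and a
   bounded lattice is bicomplete.  Send the bottom to ∅ and the left atom to E.
   Sending the right atom to * makes the weak equivalence (right atom -> top)
   pull back along the fibration (left atom -> top) to (bottom -> left atom),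
   which is not a weak equivalence; sending the right atom to ∅ instead makes
   the weak equivalence (bottom -> right atom) push out along the cofibration
   (bottom -> left atom) to (left atom -> top), again not a weak equivalence. *)
From Stdlib Require Import Bool Eqdep_dec.

Set Implicit Arguments.

Lemma CF_weq_eq (C : Category) (F : FunctorE C) (A B : C) (f : Hom A B) :
  CF_weq F f -> ~ is_iso f -> F A = F B.
Proof.
  intros [[-> ->] | [[-> ->] | iso_f]] not_iso; easy.
Qed.

Lemma not_CF_right_proper (C : Category) (F : FunctorE C)
    (P X Y Z : C) (a : Hom P X) (b : Hom P Z) (p : Hom X Y) (w : Hom Z Y) :
  is_pullback a b p w -> F X <> Star -> F Z = Star -> F Y = Star ->
  F P <> F X -> ~ is_iso a -> ~ CF_right_proper F.
Proof.
  intros pb FX FZ FY FPX not_iso right_proper.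
  apply FPX, (CF_weq_eq (f := a)); [| exact not_iso].
  apply (right_proper P X Y Z a b p w); [now left | now right; left | exact pb].
Qed.

Lemma not_CF_left_proper (C : Category) (F : FunctorE C)
    (A B Z D : C) (i : Hom A B) (w : Hom A Z) (v : Hom B D) (j : Hom Z D) :
  is_pushout i w v j -> F B <> Empt -> F A = Empt -> F Z = Empt ->
  F B <> F D -> ~ is_iso v -> ~ CF_left_proper F.
Proof.
  intros po FB FA FZ FBD not_iso left_proper.
  apply FBD, (CF_weq_eq (f := v)); [| exact not_iso].
  apply (left_proper A B Z D i w v j); [now left | now left | exact po].
Qed.

Section ThinCategory.
Variables (T : Type) (le : T -> T -> bool).
Hypothesis le_refl : forall x, le x x = true.
Hypothesis le_trans : forall x y z, le x y = true -> le y z = true -> le x z = true.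

Lemma thin_hom_eq (x y : T) (f g : le x y = true) : f = g.
Proof. apply UIP_dec, bool_dec. Qed.

Definition thin_cat : Category := {|
  Obj := T;
  Hom := fun x y => le x y = true;
  idm := le_refl;
  comp := fun x y z g f => le_trans f g;
  comp_id_l := fun _ _ _ => thin_hom_eq _ _;
  comp_id_r := fun _ _ _ => thin_hom_eq _ _;
  comp_assoc := fun _ _ _ _ _ _ _ => thin_hom_eq _ _ |}.

Definition thin_functor (G : T -> E3)
    (G_mono : forall x y, le x y = true -> E3le (G x) (G y)) : FunctorE thin_cat :=
  {| Fob := (G : thin_cat -> E3); Fmon := G_mono |}.

Lemma thin_is_iso (x y : thin_cat) (f : Hom x y) : is_iso f -> le y x = true.
Proof. now intros [g _]. Qed.

Lemma thin_is_pullback (P X Y Z : thin_cat)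
    (a : Hom P X) (b : Hom P Z) (p : Hom X Y) (w : Hom Z Y) :
  (forall q, le q X = true -> le q Z = true -> le q P = true) ->
  is_pullback a b p w.
Proof.
  intros glb; split; [apply thin_hom_eq |].
  intros Q x z _; exists (glb Q x z).
  split; [split; apply thin_hom_eq | intros; apply thin_hom_eq].
Qed.

Lemma thin_is_pushout (A B Z D : thin_cat)
    (i : Hom A B) (w : Hom A Z) (v : Hom B D) (j : Hom Z D) :
  (forall q, le B q = true -> le Z q = true -> le D q = true) ->
  is_pushout i w v j.
Proof.
  intros lub; split; [apply thin_hom_eq |].
  intros Q x z _; exists (lub Q x z).
  split; [split; apply thin_hom_eq | intros; apply thin_hom_eq].
Qed.

Section BoundedLattice.
Variables (top bot : T) (meet join : T -> T -> T).
Hypothesis le_top : forall x, le x top = true.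
Hypothesis le_bot : forall x, le bot x = true.
Hypothesis meet_l : forall x y, le (meet x y) x = true.
Hypothesis meet_r : forall x y, le (meet x y) y = true.
Hypothesis meet_glb : forall q x y, le q x = true -> le q y = true -> le q (meet x y) = true.
Hypothesis join_l : forall x y, le x (join x y) = true.
Hypothesis join_r : forall x y, le y (join x y) = true.
Hypothesis join_lub : forall q x y, le x q = true -> le y q = true -> le (join x y) q = true.

(* A parallel pair is always equal, so its (co)equalizer is an identity. *)
Lemma thin_bicomplete : bicomplete thin_cat.
Proof.
  split; split; [| split | | split].
  - exists top; intro X; exists (le_top X).
    split; [exact I | intros; apply thin_hom_eq].
  - intros X Y; exists (meet X Y), (meet_l X Y), (meet_r X Y).
    intros Q f1 f2; exists (meet_glb f1 f2).
    split; [split; apply thin_hom_eq | intros; apply thin_hom_eq].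
  - intros X Y f g; exists X, (le_refl X); split; [apply thin_hom_eq |].
    intros Q h _; exists h; split; [apply thin_hom_eq | intros; apply thin_hom_eq].
  - exists bot; intro X; exists (le_bot X).
    split; [exact I | intros; apply thin_hom_eq].
  - intros X Y; exists (join X Y), (join_l X Y), (join_r X Y).
    intros Q f1 f2; exists (join_lub f1 f2).
    split; [split; apply thin_hom_eq | intros; apply thin_hom_eq].
  - intros X Y f g; exists Y, (le_refl Y); split; [apply thin_hom_eq |].
    intros Q h _; exists h; split; [apply thin_hom_eq | intros; apply thin_hom_eq].
Qed.

End BoundedLattice.
End ThinCategory.

Arguments thin_cat {T le}.
Arguments thin_functor {T le le_refl le_trans}.
Arguments thin_bicomplete {T le}.

Definition diamond_le (x y : bool * bool) : bool :=
  implb (fst x) (fst y) && implb (snd x) (snd y).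

Definition diamond_meet (x y : bool * bool) : bool * bool := (fst x && fst y, snd x && snd y).
Definition diamond_join (x y : bool * bool) : bool * bool := (fst x || fst y, snd x || snd y).

Lemma diamond_le_refl (x : bool * bool) : diamond_le x x = true.
Proof. now destruct x as [[] []]. Qed.

Lemma diamond_le_trans (x y z : bool * bool) :
  diamond_le x y = true -> diamond_le y z = true -> diamond_le x z = true.
Proof. now destruct x as [[] []], y as [[] []], z as [[] []]. Qed.

Definition diamond : Category := thin_cat diamond_le_refl diamond_le_trans.

Lemma diamond_bicomplete : bicomplete diamond.
Proof.
  apply (thin_bicomplete diamond_le_refl diamond_le_trans
           (true, true) (false, false) diamond_meet diamond_join);
    intros; repeat match goal with x : (bool * bool)%type |- _ => destruct x as [[] []] end;
    auto.
Qed.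

Definition F_right (x : bool * bool) : E3 :=
  match x with
  | (false, false) => Empt
  | (true, false) => Emid
  | (_, true) => Star
  end.

Definition F_left (x : bool * bool) : E3 :=
  match x with
  | (false, false) | (false, true) => Empt
  | (true, false) => Emid
  | (true, true) => Star
  end.

Lemma F_right_mono (x y : bool * bool) : diamond_le x y = true -> E3le (F_right x) (F_right y).
Proof. now destruct x as [[] []], y as [[] []]. Qed.

Lemma F_left_mono (x y : bool * bool) : diamond_le x y = true -> E3le (F_left x) (F_left y).
Proof. now destruct x as [[] []], y as [[] []]. Qed.

Theorem corollary4 :
  (exists (C : Category) (F : FunctorE C), bicomplete C /\ ~ CF_right_proper F) /\
  (exists (C : Category) (F : FunctorE C), bicomplete C /\ ~ CF_left_proper F).
Proof.
  split.
  - exists diamond, (thin_functor F_right F_right_mono).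
    split; [exact diamond_bicomplete |].
    apply (@not_CF_right_proper diamond _ (false, false) (true, false) (true, true) (false, true)
             eq_refl eq_refl eq_refl eq_refl); try easy.
    + apply thin_is_pullback; now intros [[] []].
    + intros iso; discriminate (thin_is_iso iso).
  - exists diamond, (thin_functor F_left F_left_mono).
    split; [exact diamond_bicomplete |].
    apply (@not_CF_left_proper diamond _ (false, false) (true, false) (false, true) (true, true)
             eq_refl eq_refl eq_refl eq_refl); try easy.
    + apply thin_is_pushout; now intros [[] []].
    + intros iso; discriminate (thin_is_iso iso).
Qed.
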